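(* Let $d\ge2$ be an integer, $P\subset\mathbb{R}^d$ a finite set, and $S$ a rectilinear Steiner minimal tree of $P$. Let $B$ be the set of circumballs of the line segments of $S$. Then for any $\lambda>0$, $B$ is $(\lambda,O(\lambda^d))$-thick.
   Context: A rectilinear Steiner tree of $P$ is a connected geometric graph containing all points of $P$ whose edges are line segments parallel to coordinate axes (possibly using extra ''Steiner'' vertices); its length is the total length of its segments; a rectilinear Steiner minimal tree (RSMT) is one of minimum length. The circumball of a segment $xy$ is the closed ball having $xy$ as a diameter. A collection $D$ of subsets of $\mathbb{R}^d$ is $\kappa$-thick if no point lies in more than $\kappa$ elements of $D$; a subset is $\lambda$-related if the ratio between diameters of any two of its elements is at most $\lambda$; $D$ is $(\lambda,\kappa)$-thick if no point lies in more than $\kappa$ elements of any $\lambda$-related subset of $D$. The constant in $O(\lambda^d)$ may depend on $d$. *)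

From Stdlib Require Import Reals List.
From mathcomp Require Import ssreflect ssrfun ssrbool eqtype ssrnat fintype bigop.
Open Scope R_scope.

Definition point (d : nat) := 'I_d -> R.

Definition edist {d : nat} (x y : point d) : R :=
  sqrt (\big[Rplus/0]_(i < d) (x i - y i)^2).

Definition segment (d : nat) := (point d * point d)%type.

Definition axis_parallel {d : nat} (s : segment d) : Prop :=
  exists i : 'I_d, fst s i <> snd s i /\ forall j : 'I_d, j <> i -> fst s j = snd s j.

Definition seg_length {d : nat} (s : segment d) : R := edist (fst s) (snd s).

Definition total_length {d : nat} (E : list (segment d)) : R :=
  fold_right (fun s acc => seg_length s + acc) 0 E.

Inductive reach {d : nat} (E : list (segment d)) : point d -> point d -> Prop :=
  | reach_refl x : reach E x x
  | reach_fwd x y z : In (x, y) E -> reach E y z -> reach E x z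
  | reach_bwd x y z : In (y, x) E -> reach E y z -> reach E x z.

(* A rectilinear Steiner tree of P: a connected geometric graph with vertex
   list V (containing P; the extra vertices are Steiner points) and edge list E,
   all of whose edges are axis-parallel segments between vertices. *)
Definition rect_steiner_tree {d : nat} (P : list (point d))
    (V : list (point d)) (E : list (segment d)) : Prop :=
  (forall p, In p P -> In p V) /\
  (forall s, In s E -> In (fst s) V /\ In (snd s) V /\ axis_parallel s) /\
  (forall u v, In u V -> In v V -> reach E u v).

Definition RSMT {d : nat} (P : list (point d))
    (V : list (point d)) (E : list (segment d)) : Prop :=
  rect_steiner_tree P V E /\
  forall V' E', rect_steiner_tree P V' E' -> total_length E <= total_length E'.

(* A closed ball, represented by (center, radius). *)
Definition ball (d : nat) := (point d * R)%type.

Definition in_ball {d : nat} (x : point d) (b : ball d) : Prop :=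
  edist x (fst b) <= snd b.

Definition diam {d : nat} (b : ball d) : R := 2 * snd b.

Definition circumball {d : nat} (s : segment d) : ball d :=
  ((fun i => (fst s i + snd s i) / 2), seg_length s / 2).

Definition related {d : nat} (lam : R) (D : list (ball d)) : Prop :=
  forall a b, In a D -> In b D -> diam a <= lam * diam b.

(* (lambda,kappa)-thick: no point lies in more than kappa elements of any
   lambda-related subset of D.  Subsets are duplicate-free sublists. *)
Definition thick_lk {d : nat} (lam kappa : R) (D : list (ball d)) : Prop :=
  forall (D' : list (ball d)) (x : point d),
    NoDup D' -> incl D' D -> related lam D' ->
    (forall b, In b D' -> in_ball x b) ->
    INR (length D') <= kappa.

From Stdlib Require Import Reals List Lra Lia ZArith ROrderedType.
From Stdlib Require Import FunctionalExtensionality Classical.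
From mathcomp Require Import ssreflect ssrfun ssrbool eqtype ssrnat fintype bigop finfun.
From HB Require Import structures.
Open Scope R_scope.

(* Fix a point x lying in the circumballs of a lambda-related family of edges of
   an RSMT, and let r0 be one of their radii, so that every radius r satisfies
   r0/lambda <= r <= lambda r0.  Record each edge by a key: its axis, r on a grid
   of mesh r0/(M lambda), and the offset of its midpoint from x on a grid of mesh
   r/M in each coordinate, where M = 4d + 1.  Two distinct edges with the same
   key are parallel, have almost the same radius and almost the same midpoint,
   so each endpoint of the first is within 4r/M of an endpoint of the second in
   every coordinate.  Deleting the first edge and joining its endpoints to those
   of the second by staircase paths then shortens the tree by at least
   2r - 8dr/M > 0, which is impossible.  So keys are injective on the family and
   its size is at most (d + 1) (M lambda^2 + 1) (2M + 1)^d = O(lambda^d), using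
   d >= 2. *)

Section Reach.
Context {d : nat}.
Implicit Types (E F : list (segment d)) (x y z : point d).

Lemma reach_trans {E x y z} : reach E x y -> reach E y z -> reach E x z.
Proof.
elim=> [//|u v w h _ IH|u v w h _ IH] hz.
- exact: reach_fwd h (IH hz).
- exact: reach_bwd h (IH hz).
Qed.

Lemma reach_edge {E x y} : In (x, y) E -> reach E x y.
Proof. by move=> h; apply: reach_fwd h (reach_refl _ _). Qed.

Lemma reach_edge_r {E x y} : In (x, y) E -> reach E y x.
Proof. by move=> h; apply: reach_bwd h (reach_refl _ _). Qed.

Lemma reach_sym {E x y} : reach E x y -> reach E y x.
Proof.
elim=> [u|u v w h _ IH|u v w h _ IH]; first exact: reach_refl.
- exact: reach_trans IH (reach_edge_r h).
- exact: reach_trans IH (reach_edge h).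
Qed.

Lemma reach_subst {E F x y} :
  (forall u v, In (u, v) E -> reach F u v) -> reach E x y -> reach F x y.
Proof.
move=> hEF; elim=> [u|u v w h _ IH|u v w h _ IH]; first exact: reach_refl.
- exact: reach_trans (hEF _ _ h) IH.
- exact: reach_trans (reach_sym (hEF _ _ h)) IH.
Qed.

Lemma reach_incl {E F x y} : incl E F -> reach E x y -> reach F x y.
Proof. by move=> hEF; apply: reach_subst => u v /hEF /reach_edge. Qed.

End Reach.

Section SteinerTrees.
Context {d : nat}.
Implicit Types (P V : list (point d)) (E : list (segment d)) (a b : point d).

Lemma total_length_app E1 E2 :
  total_length (E1 ++ E2) = total_length E1 + total_length E2.
Proof. elim: E1 => [|s E IH] /=; [lra | rewrite IH; lra]. Qed.

Lemma rect_steiner_tree_point a : rect_steiner_tree (a :: a :: nil) (a :: nil) nil.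
Proof.
split; [|split] => //.
- by move=> p [<-|[<-|[]]]; left.
- by move=> u v [<-|[]] [<-|[]]; apply: reach_refl.
Qed.

Lemma rect_steiner_tree_edge {a b} :
  axis_parallel (a, b) -> rect_steiner_tree (a :: b :: nil) (a :: b :: nil) ((a, b) :: nil).
Proof.
move=> hab; split; [|split] => //.
- by move=> s [<-|[]]; split; [left | split; [right; left |]].
- have hV w : In w (a :: b :: nil) -> reach ((a, b) :: nil) a w.
    by move=> [<-|[<-|[]]]; [apply: reach_refl | apply: reach_edge; left].
  by move=> u v /hV hu /hV hv; apply: reach_trans (reach_sym hu) hv.
Qed.

Lemma rect_steiner_tree_incl_terminals {P Q V E} :
  incl Q P -> rect_steiner_tree P V E -> rect_steiner_tree Q V E.
Proof. by move=> hQP [hP hE]; split => // p /hQP /hP. Qed.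

Lemma rect_steiner_tree_glue {P1 V1 E1 P2 V2 E2 v} :
  rect_steiner_tree P1 V1 E1 -> rect_steiner_tree P2 V2 E2 -> In v V1 -> In v V2 ->
  rect_steiner_tree (P1 ++ P2) (V1 ++ V2) (E1 ++ E2).
Proof.
move=> [hP1 [hE1 hR1]] [hP2 [hE2 hR2]] hv1 hv2.
have hV w : In w (V1 ++ V2) -> reach (E1 ++ E2) v w.
  case/(in_app_or V1 V2 w) => hw.
  - by apply: (reach_incl (incl_appl _ (incl_refl _))); apply: hR1.
  - by apply: (reach_incl (incl_appr _ (incl_refl _))); apply: hR2.
split; [|split].
- by move=> p /(in_app_or P1 P2 p) [/hP1|/hP2] hp; apply: in_or_app; [left | right].
- move=> s /(in_app_or E1 E2 s) [/hE1|/hE2] [h1 [h2 h3]]; split; try split => //;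
    apply: in_or_app; by [left | right].
- by move=> u w /hV hu /hV hw; apply: reach_trans (reach_sym hu) hw.
Qed.

Lemma rect_steiner_tree_drop_edge {P V E1 s E2} :
  rect_steiner_tree P V (E1 ++ s :: E2) -> reach (E1 ++ E2) (fst s) (snd s) ->
  rect_steiner_tree P V (E1 ++ E2).
Proof.
move=> [hP [hE hR]] hs; split; [|split] => //.
- move=> e /(in_app_or E1 E2 e) he; apply: hE; apply: in_or_app.
  by case: he; [left | right; right].
- move=> u v hu hv; apply: reach_subst (hR u v hu hv) => p q.
  case/(in_app_or E1 (s :: E2)) => [h|[h|h]].
  + by apply: reach_edge; apply: in_or_app; left.
  + by rewrite h in hs.
  + by apply: reach_edge; apply: in_or_app; right.
Qed.

End SteinerTrees.

HB.instance Definition _ := Monoid.isComLaw.Build R 0 Rplus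
  (fun x y z => esym (Rplus_assoc x y z)) Rplus_comm Rplus_0_l.

Lemma In_index_enum (T : finType) (x : T) : In x (index_enum T).
Proof.
have : seq.mem_seq (index_enum T) x := mem_index_enum x.
by elim: (index_enum T) => //= y s IH /orP [/eqP ->|/IH]; [left | right].
Qed.

Definition l1dist {d : nat} (a b : point d) : R := \big[Rplus/0]_(j < d) Rabs (a j - b j).

Definition parallel_at {d : nat} (i : 'I_d) (s : segment d) : Prop :=
  fst s i <> snd s i /\ forall j, j <> i -> fst s j = snd s j.

Section Distances.
Context {d : nat}.
Implicit Types (a b : point d) (s : segment d).

Lemma edist_parallel {i s} : parallel_at i s -> seg_length s = Rabs (fst s i - snd s i).
Proof.
move=> [_ hs]; rewrite /seg_length /edist (bigD1 i) // big1.
  by rewrite Monoid.mulm1 -Rsqr_pow2 sqrt_Rsqr_abs.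
by move=> j /eqP /hs ->; rewrite Rminus_diag; ring.
Qed.

Lemma Rabs_coord_le_edist a b i : Rabs (a i - b i) <= edist a b.
Proof.
rewrite -sqrt_Rsqr_abs Rsqr_pow2 /edist; apply: sqrt_le_1_alt.
rewrite (bigD1 i) // -{1}[_ ^ 2]Rplus_0_r; apply: Rplus_le_compat_l.
by apply: big_ind => [|u v|j _]; [lra | apply: Rplus_le_le_0_compat | apply: pow2_ge_0].
Qed.

Lemma l1dist_le_bound {a b t} :
  (forall j, Rabs (a j - b j) <= t) -> l1dist a b <= INR d * t.
Proof.
move=> hab; apply: (Rle_trans _ (\big[Rplus/0]_(j < d) t)).
  by apply: big_ind2 => [|u1 u2 v1 v2|j _]; [lra | apply: Rplus_le_compat | apply: hab].
rewrite big_const_ord; elim: d {a b hab} => [|n IH]; first by rewrite /=; lra.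
by rewrite iterS S_INR; lra.
Qed.

Lemma rect_steiner_tree_staircase (l : list 'I_d) a b :
  (forall j, ~ In j l -> a j = b j) ->
  exists V E, rect_steiner_tree (a :: b :: nil) V E /\
    total_length E <= \big[Rplus/0]_(j <- l) Rabs (a j - b j).
Proof.
elim: l a => [|j l IH] a hab.
  have -> : b = a by apply: functional_extensionality => k; rewrite hab.
  exists (a :: nil), nil; split; first exact: rect_steiner_tree_point.
  by rewrite big_nil /=; lra.
pose a' k := if k == j then b j else a k.
have [V [E [hT hE]]] : exists V E, rect_steiner_tree (a' :: b :: nil) V E /\
    total_length E <= \big[Rplus/0]_(k <- l) Rabs (a' k - b k).
  apply: IH => k hk; rewrite /a'; case: eqP => [-> //|hkj].
  by apply: hab => -[/esym|].
have hl : \big[Rplus/0]_(k <- l) Rabs (a' k - b k) <= \big[Rplus/0]_(k <- l) Rabs (a k - b k).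
  apply: big_ind2 => [|u1 u2 v1 v2|k _]; [lra | apply: Rplus_le_compat |].
  rewrite /a'; case: eqP => [->|_]; last lra.
  by rewrite Rminus_diag Rabs_R0; apply: Rabs_pos.
rewrite big_cons.
case: (Req_EM_T (a j) (b j)) => [eab|neab].
  have ea : a' = a.
    by apply: functional_extensionality => k; rewrite /a'; case: eqP => [->|].
  rewrite ea in hT hE; exists V, E; split => //.
  by have := Rabs_pos (a j - b j); lra.
have hpar : parallel_at j (a, a') by split => [|k /eqP /negbTE]; rewrite /a' /= ?eqxx // => ->.
have hedge : axis_parallel (a, a') by exists j.
exists ((a :: a' :: nil) ++ V), (((a, a') :: nil) ++ E); split.
  apply: rect_steiner_tree_incl_terminals
    (rect_steiner_tree_glue (rect_steiner_tree_edge hedge) hT _ _).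
  - by move=> p [<-|[<-|[]]]; [left | right; right; right; left].
  - by right; left.
  - by case: hT => hP _; apply: hP; left.
rewrite total_length_app /= (edist_parallel hpar) /a' /= eqxx.
lra.
Qed.

Lemma rect_steiner_tree_l1 a b :
  exists V E, rect_steiner_tree (a :: b :: nil) V E /\ total_length E <= l1dist a b.
Proof. by apply: rect_steiner_tree_staircase => j []; apply: In_index_enum. Qed.

End Distances.

Lemma rect_steiner_tree_reach {d} {P V E} {a b : point d} :
  rect_steiner_tree P V E -> In a P -> In b P -> reach E a b.
Proof. by move=> [hP [_ hR]] /hP ha /hP hb; apply: hR. Qed.

Lemma rsmt_edge_le_detour {d} {P V E1 s E2} {p q : point d} :
  RSMT P V (E1 ++ s :: E2) -> reach (E1 ++ E2) p q ->
  seg_length s <= l1dist (fst s) p + l1dist (snd s) q.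
Proof.
move=> [hT hmin] hpq; apply: Rnot_lt_le => hlt.
have [W1 [F1 [hT1 hF1]]] := rect_steiner_tree_l1 (fst s) p.
have [W2 [F2 [hT2 hF2]]] := rect_steiner_tree_l1 (snd s) q.
have [ha [hb _]] : In (fst s) V /\ In (snd s) V /\ axis_parallel s.
  by case: hT => _ [hE _]; apply: hE; apply: in_or_app; right; left.
have hW1 : In (fst s) W1 by case: hT1 => hP1 _; apply: hP1; left.
have hW2 : In (snd s) W2 by case: hT2 => hP2 _; apply: hP2; left.
have hT12 := rect_steiner_tree_glue (rect_steiner_tree_glue hT hT1 ha hW1) hT2
  (in_or_app _ _ _ (or_introl hb)) hW2.
rewrite -!app_assoc /= in hT12.
have hab : reach (E1 ++ E2 ++ F1 ++ F2) (fst s) (snd s).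
  apply: (reach_trans (y := p)).
    apply: reach_incl (rect_steiner_tree_reach hT1 _ _); last by right; left.
    - exact: incl_appr _ (incl_appr _ (incl_appl _ (incl_refl _))).
    - by left.
  apply: (reach_trans (y := q)).
    apply: reach_incl hpq.
    exact: incl_app (incl_appl _ (incl_refl _)) (incl_appr _ (incl_appl _ (incl_refl _))).
  apply: reach_incl (rect_steiner_tree_reach hT2 _ _); last by left.
  - exact: incl_appr _ (incl_appr _ (incl_appr _ (incl_refl _))).
  - by right; left.
have hT' := rect_steiner_tree_incl_terminals (incl_appl _ (incl_refl P))
  (rect_steiner_tree_drop_edge hT12 hab).
by have := hmin _ _ hT'; rewrite !total_length_app /=; lra.
Qed.

Definition midpoint {d : nat} (s : segment d) : point d := fst (circumball s).
Definition radius {d : nat} (s : segment d) : R := snd (circumball s).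

Lemma endpoints_close_of_midpoint_radius {a b c e h k : R} :
  Rabs ((a + b) / 2 - (c + e) / 2) <= h ->
  Rabs (Rabs (a - b) / 2 - Rabs (c - e) / 2) <= k ->
  (Rabs (a - c) <= h + k /\ Rabs (b - e) <= h + k) \/
  (Rabs (a - e) <= h + k /\ Rabs (b - c) <= h + k).
Proof.
move=> hm hr.
case: (Rle_or_lt a b); case: (Rle_or_lt c e) => hce hab;
  [left | right | right | left]; split; move: hm hr; split_Rabs; lra.
Qed.

Lemma parallel_segments_close {d i} {s1 s2 : segment d} {h k} :
  parallel_at i s1 -> parallel_at i s2 ->
  (forall j, Rabs (midpoint s1 j - midpoint s2 j) <= h) ->
  Rabs (radius s1 - radius s2) <= k ->
  exists p q, (s2 = (p, q) \/ s2 = (q, p)) /\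
    forall j, Rabs (fst s1 j - p j) <= h + k /\ Rabs (snd s1 j - q j) <= h + k.
Proof.
case: s1 s2 => [a b] [c e] h1 h2 hm hr.
have hk : 0 <= k by apply: Rle_trans hr; apply: Rabs_pos.
have off j : j <> i -> [/\ Rabs (a j - c j) <= h + k, a j = b j & c j = e j].
  move=> hj; have ab : a j = b j := h1.2 j hj; have ce : c j = e j := h2.2 j hj.
  have := hm j; rewrite /midpoint /= -ab -ce => hmj.
  by split => //; move: hmj; split_Rabs; lra.
have hri : Rabs (Rabs (a i - b i) / 2 - Rabs (c i - e i) / 2) <= k.
  by move: hr; rewrite /radius /= -(edist_parallel h1) -(edist_parallel h2).
have [[hac hbe]|[hae hbc]] := endpoints_close_of_midpoint_radius (hm i) hri.
- exists c, e; split; first by left.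
  move=> j /=; case: (j =P i) => [-> //|/off [hj <- <-]]; by split.
- exists e, c; split; first by right.
  move=> j /=; case: (j =P i) => [-> //|/off [hj <- <-]]; by split.
Qed.

Lemma radius_pos_of_parallel {d} {i} {s : segment d} : parallel_at i s -> 0 < radius s.
Proof.
move=> hs; rewrite /radius /= (edist_parallel hs).
by have := Rabs_pos_lt _ (Rminus_eq_contra _ _ hs.1); lra.
Qed.

Lemma midpoint_coord_close {d} {x : point d} {s} j :
  in_ball x (circumball s) -> Rabs (midpoint s j - x j) <= radius s.
Proof. by rewrite Rabs_minus_sym; apply: Rle_trans (Rabs_coord_le_edist _ _ j). Qed.

Definition nfloor (r : R) : nat := Z.to_nat (Int_part r).

Lemma Int_part_nonneg {r} : 0 <= r -> (0 <= Int_part r)%Z.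
Proof.
move=> hr; have [_ h] := base_Int_part r.
have : (-1 < Int_part r)%Z by apply: lt_IZR; lra.
lia.
Qed.

Lemma nfloor_eq_close {r r'} : 0 <= r -> 0 <= r' -> nfloor r = nfloor r' -> Rabs (r - r') < 1.
Proof.
move=> hr hr' /(Z2Nat.inj _ _ (Int_part_nonneg hr) (Int_part_nonneg hr')) e.
by have := base_Int_part r; have := base_Int_part r'; rewrite e; split_Rabs; lra.
Qed.

Lemma nfloor_le_mono r r' : r <= r' -> (nfloor r <= nfloor r')%N.
Proof.
move=> hrr'; have [h1 _] := base_Int_part r; have [_ h2] := base_Int_part r'.
have : (Int_part r < Int_part r' + 1)%Z by apply: lt_IZR; rewrite plus_IZR; lra.
by move=> h; apply/leP; rewrite /nfloor; lia.
Qed.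

Lemma nfloor_INR n : nfloor (INR n) = n.
Proof. by rewrite /nfloor Int_part_INR Nat2Z.id. Qed.

Lemma INR_nfloor_le {r} : 0 <= r -> INR (nfloor r) <= r.
Proof.
move=> hr; rewrite /nfloor INR_IZR_INZ Z2Nat.id; last exact: Int_part_nonneg.
exact: (base_Int_part r).1.
Qed.

Lemma rescaled_close {M r1 r2 u1 u2 : R} : 1 <= M -> 0 < r1 -> 0 < r2 ->
  Rabs u1 <= r1 -> Rabs (r1 - r2) <= r1 / M ->
  Rabs (M * u1 / r1 - M * u2 / r2) < 1 -> Rabs (u1 - u2) <= 3 * r1 / M.
Proof.
move=> hM h1 h2 hu hr hw.
set w1 := M * u1 / r1; set w2 := M * u2 / r2.
have hw12 : Rabs (w1 - w2) < 1 := hw.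
have hrM : r1 / M * M = r1 by field; lra.
have -> : u1 - u2 = ((r1 - r2) * w1 + r2 * (w1 - w2)) / M by rewrite /w1 /w2; field; lra.
have hw1 : Rabs w1 <= M.
  have : Rabs u1 * / r1 <= 1.
    by apply: (Rmult_le_reg_r r1) => //; rewrite Rmult_assoc Rinv_l; lra.
  rewrite /w1 /Rdiv !Rabs_mult Rabs_inv (Rabs_pos_eq M) ?(Rabs_pos_eq r1); try lra.
  by have := Rabs_pos u1; nra.
have h12 : Rabs ((r1 - r2) * w1) <= r1.
  rewrite Rabs_mult.
  by apply: Rle_trans (Rmult_le_compat _ _ _ _ (Rabs_pos _) (Rabs_pos _) hr hw1) _; lra.
have h22 : Rabs (r2 * (w1 - w2)) <= r2 by rewrite Rabs_mult Rabs_pos_eq; nra.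
have hr2 : r2 <= 2 * r1 by move: hr; split_Rabs; nra.
rewrite /Rdiv Rabs_mult Rabs_inv (Rabs_pos_eq M); last lra.
apply: Rmult_le_compat_r; first by apply: Rlt_le; apply: Rinv_0_lt_compat; lra.
by have := Rabs_triang ((r1 - r2) * w1) (r2 * (w1 - w2)); lra.
Qed.

(* Any value above 4 d works: the two staircase detours built in
   [key_collision_detour] have total length at most 8 d r / grid d, less than
   the length 2 r of the edge they replace. *)
Definition grid (d : nat) : nat := (4 * d).+1.

Lemma INR_grid d : INR (grid d) = 4 * INR d + 1.
Proof. by rewrite /grid S_INR -multE mult_INR /=; ring. Qed.

Lemma grid_ge1 {d} : 1 <= INR (grid d).
Proof. by rewrite INR_grid; have := pos_INR d; lra. Qed.

Section Quantization.
Context {d : nat} (x : point d) (r0 lam : R).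
Hypotheses (hr0 : 0 < r0) (hlam : 0 < lam).

Definition radius_level (s : segment d) : nat :=
  nfloor (radius s * (INR (grid d) * lam) / r0).

(* The shift by [grid d] keeps the argument of [nfloor] nonnegative, since the
   midpoint offset is at most the radius when x lies in the circumball. *)
Definition midpoint_cell (s : segment d) (j : 'I_d) : nat :=
  nfloor (INR (grid d) * (midpoint s j - x j) / radius s + INR (grid d)).

Lemma radius_close_of_level {s1 s2} :
  r0 <= lam * radius s1 -> 0 < radius s2 -> radius_level s1 = radius_level s2 ->
  Rabs (radius s1 - radius s2) <= radius s1 / INR (grid d).
Proof.
move=> hs1 hs2 hlev; have hM := @grid_ge1 d.
set q := INR (grid d) * lam / r0.
have hq : 0 < q by apply: Rdiv_lt_0_compat => //; nra.
have e r : r * (INR (grid d) * lam) / r0 = r * q by rewrite /q; field; lra.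
have h : Rabs (radius s1 * q - radius s2 * q) < 1.
  by apply: nfloor_eq_close; [nra | nra | rewrite -!e].
rewrite -Rmult_minus_distr_r Rabs_mult (Rabs_pos_eq q) in h; last lra.
have e1 : radius s1 / INR (grid d) * q = radius s1 * lam / r0 by rewrite /q; field; lra.
have : 1 <= radius s1 * lam / r0.
  by apply: (Rmult_le_reg_r r0) => //; rewrite /Rdiv Rmult_assoc Rinv_l; lra.
by move=> h1; apply: Rlt_le; apply: (Rmult_lt_reg_r q) => //; lra.
Qed.

Lemma midpoint_close_of_cell {s1 s2} j :
  0 < radius s1 -> 0 < radius s2 ->
  in_ball x (circumball s1) -> in_ball x (circumball s2) ->
  Rabs (radius s1 - radius s2) <= radius s1 / INR (grid d) ->
  midpoint_cell s1 j = midpoint_cell s2 j ->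
  Rabs (midpoint s1 j - midpoint s2 j) <= 3 * radius s1 / INR (grid d).
Proof.
move=> h1 h2 hx1 hx2 hr hcell; have hM := @grid_ge1 d.
have hw s : 0 < radius s -> in_ball x (circumball s) ->
    0 <= INR (grid d) * (midpoint s j - x j) / radius s + INR (grid d).
  move=> hs /(midpoint_coord_close j) hm.
  have : - radius s <= midpoint s j - x j by move: hm; split_Rabs; lra.
  move=> hm'; rewrite /Rdiv Rmult_assoc.
  have : -1 <= (midpoint s j - x j) * / radius s.
    by apply: (Rmult_le_reg_r (radius s)) => //; rewrite Rmult_assoc Rinv_l; lra.
  nra.
have := nfloor_eq_close (hw _ h1 hx1) (hw _ h2 hx2) hcell.
rewrite (_ : forall a b c : R, a + c - (b + c) = a - b); last by move=> *; ring.
move/(rescaled_close hM h1 h2 (midpoint_coord_close j hx1) hr).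
by rewrite (_ : forall a b c : R, a - c - (b - c) = a - b) //; move=> *; ring.
Qed.

Lemma key_collision_detour i s1 s2 :
  parallel_at i s1 -> parallel_at i s2 ->
  in_ball x (circumball s1) -> in_ball x (circumball s2) -> r0 <= lam * radius s1 ->
  radius_level s1 = radius_level s2 -> (forall j, midpoint_cell s1 j = midpoint_cell s2 j) ->
  exists p q, (s2 = (p, q) \/ s2 = (q, p)) /\
    l1dist (fst s1) p + l1dist (snd s1) q < seg_length s1.
Proof.
move=> hp1 hp2 hx1 hx2 hs1 hlev hcell.
have h1 := radius_pos_of_parallel hp1; have h2 := radius_pos_of_parallel hp2.
have hr := radius_close_of_level hs1 h2 hlev.
have hm j := midpoint_close_of_cell j h1 h2 hx1 hx2 hr (hcell j).
have [p [q [hs2 hpq]]] := parallel_segments_close hp1 hp2 hm hr.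
exists p, q; split => //.
have b1 := l1dist_le_bound (fun j => (hpq j).1).
have b2 := l1dist_le_bound (fun j => (hpq j).2).
set t := 3 * radius s1 / INR (grid d) + radius s1 / INR (grid d) in b1 b2.
have ht : INR d * t * (4 * INR d + 1) = 4 * INR d * radius s1.
  by rewrite /t -INR_grid; field; have := @grid_ge1 d; lra.
have : INR d * t < radius s1.
  apply: (Rmult_lt_reg_r (4 * INR d + 1)); first by have := pos_INR d; lra.
  by rewrite ht; lra.
have -> : seg_length s1 = 2 * radius s1 by rewrite /radius /=; field.
lra.
Qed.

Lemma radius_level_le s :
  radius s <= lam * r0 -> (radius_level s <= nfloor (INR (grid d) * lam ^ 2))%N.
Proof.
move=> hs; apply: nfloor_le_mono; have hM := @grid_ge1 d.
have -> : radius s * (INR (grid d) * lam) / r0 = INR (grid d) * lam * (radius s / r0).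
  by field; lra.
have : radius s / r0 <= lam.
  by apply: (Rmult_le_reg_r r0) => //; rewrite /Rdiv Rmult_assoc Rinv_l; lra.
have : 0 <= INR (grid d) * lam by nra.
nra.
Qed.

Lemma midpoint_cell_le s j :
  0 < radius s -> in_ball x (circumball s) -> (midpoint_cell s j <= 2 * grid d)%N.
Proof.
move=> hs /(midpoint_coord_close j) hm.
rewrite -[X in (_ <= X)%N]nfloor_INR; apply: nfloor_le_mono.
rewrite -multE mult_INR (_ : INR 2 = 2); last by rewrite /=; lra.
have : (midpoint s j - x j) / radius s <= 1.
  apply: (Rmult_le_reg_r (radius s)) => //.
  by rewrite /Rdiv Rmult_assoc Rinv_l //; split_Rabs; lra.
have := @grid_ge1 d; nra.
Qed.

End Quantization.

Lemma incl_map_inv {A B : Type} {f : A -> B} {D : list B} {E : list A} :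
  incl D (map f E) -> exists S, D = map f S /\ incl S E.
Proof.
elim: D => [|b D IH] hD; first by exists nil; split; [|apply: incl_nil_l].
have [hb /IH [S [-> hS]]] := incl_cons_inv hD.
have /in_map_iff [s [<- hs]] := hb.
by exists (s :: S); split => // y [<-|/hS].
Qed.

Lemma NoDup_length_le_card {T : finType} {l : list T} : NoDup l -> (length l <= #|T|)%N.
Proof.
move=> hl; have := NoDup_incl_length hl (fun y _ => In_index_enum _ y).
have -> : length (index_enum T) = #|T|.
  by rewrite cardE enumT [index_enum T]unlock; elim: (Finite.enum T) => //= y s ->.
by move/leP.
Qed.

Definition axis {d : nat} (s : segment d) : option 'I_d :=
  [pick i | ~~ Reqb (fst s i) (snd s i)].

Lemma axis_parallel_at {d} {s : segment d} :
  axis_parallel s -> exists2 i, axis s = Some i & parallel_at i s.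
Proof.
move=> [i [hi hoff]]; exists i; last by split.
rewrite /axis.
case: pickP => [k /negP hk|/(_ i) /negbFE /Reqb_eq //].
by case: (k =P i) => [-> //|/hoff /Reqb_eq].
Qed.

Section Counting.
Context {d : nat} (P V : list (point d)) (E S : list (segment d)) (x : point d) (r0 lam : R).
Hypotheses (hE : RSMT P V E) (hSE : incl S E) (hr0 : 0 < r0) (hlam : 0 < lam).
Hypothesis hrad : forall s, In s S -> r0 <= lam * radius s /\ radius s <= lam * r0.
Hypothesis hx : forall s, In s S -> in_ball x (circumball s).

Lemma rsmt_key_injective u v : In u S -> In v S -> axis u = axis v ->
  radius_level r0 lam u = radius_level r0 lam v ->
  (forall j, midpoint_cell x u j = midpoint_cell x v j) -> u = v.
Proof.
move=> hu hv hax hlev hcell; apply: NNPP => huv.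
have [_ [hpar _]] := hE.1.
have [i hui hpi] := axis_parallel_at (hpar u (hSE u hu)).2.2.
have [k hvk hpk] := axis_parallel_at (hpar v (hSE v hv)).2.2.
move: hax hpk; rewrite hui hvk => -[<-] hpk.
have [p [q [hv' hdet]]] := key_collision_detour x r0 lam hr0 hlam i u v
  hpi hpk (hx u hu) (hx v hv) (hrad u hu).1 hlev hcell.
have [E1 [E2 eE]] := in_split u E (hSE u hu).
have hvE : In v (E1 ++ E2).
  move: (hSE v hv); rewrite eE => /(in_app_or E1 (u :: E2) v) [h|[h|h]];
    by [apply: in_or_app; left | | apply: in_or_app; right].
have hpq : reach (E1 ++ E2) p q.
  by case: hv' hvE => -> hvE; [apply: reach_edge | apply: reach_edge_r].
have hE' : RSMT P V (E1 ++ u :: E2) by rewrite -eE.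
have := rsmt_edge_le_detour hE' hpq; lra.
Qed.

Lemma rsmt_related_count : NoDup S ->
  (length S <= d.+1 * (nfloor (INR (grid d) * lam ^ 2)).+1 * (2 * grid d).+1 ^ d)%N.
Proof.
move=> hS.
pose key (s : segment d) : option 'I_d * 'I_(nfloor (INR (grid d) * lam ^ 2)).+1 *
    {ffun 'I_d -> 'I_(2 * grid d).+1} :=
  (axis s, inord (radius_level r0 lam s), [ffun j => inord (midpoint_cell x s j)]).
have hkey : NoDup (map key S).
  apply: NoDup_map_NoDup_ForallPairs hS => u v hu hv [hax hlev hcell].
  have hcell_le s j : In s S -> (midpoint_cell x s j < (2 * grid d).+1)%N.
    move=> hs; apply: midpoint_cell_le (hx s hs).
    by have := (hrad s hs).1; nra.
  apply: rsmt_key_injective => //.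
  - move/(congr1 (@nat_of_ord _)): hlev; rewrite !inordK //;
      by [apply: radius_level_le (hrad v hv).2 | apply: radius_level_le (hrad u hu).2].
  - move=> j.
    move/(congr1 (fun f : {ffun 'I_d -> 'I_(2 * grid d).+1} => nat_of_ord (f j))): hcell.
    by rewrite /= !ffunE !inordK //; apply: hcell_le.
have := NoDup_length_le_card hkey.
by rewrite length_map !card_prod card_option card_ffun !card_ord.
Qed.

End Counting.

Lemma INR_expn m n : INR (m ^ n) = INR m ^ n.
Proof. by elim: n => [|n IH] //; rewrite expnS -multE mult_INR IH. Qed.

Lemma related_count_le_pow {d L K lam} : (2 <= d)%N -> 1 <= lam ->
  INR L <= INR (grid d) * lam ^ 2 ->
  INR (d.+1 * L.+1 * K ^ d) <= INR d.+1 * (INR (grid d) + 1) * INR K ^ d * lam ^ d.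
Proof.
move=> hd hlam hL.
have h2 : 1 <= lam ^ 2 by rewrite -(pow1 2); apply: pow_incr; lra.
have h2d : lam ^ 2 <= lam ^ d by apply: Rle_pow => //; apply/leP.
have hM := @grid_ge1 d.
have hK : 0 <= INR d.+1 * INR K ^ d by apply: Rmult_le_pos; [|apply: pow_le]; apply: pos_INR.
have : INR L.+1 <= (INR (grid d) + 1) * lam ^ d by rewrite S_INR; nra.
by rewrite -!multE !mult_INR INR_expn; nra.
Qed.

Lemma related_radius_bounds {d} {lam} {S : list (segment d)} {s0} :
  related lam (map circumball S) -> In s0 S ->
  forall s, In s S -> radius s0 <= lam * radius s /\ radius s <= lam * radius s0.
Proof.
move=> hrel hs0 s hs; have := hrel _ _ (in_map circumball _ _ hs0) (in_map _ _ _ hs).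
have := hrel _ _ (in_map _ _ _ hs) (in_map circumball _ _ hs0).
by rewrite /diam /radius; lra.
Qed.

Theorem lemma6 (d : nat) (hd : (2 <= d)%nat) :
  exists C : R, 0 < C /\
    forall (P : list (point d)) (V : list (point d)) (E : list (segment d)),
      RSMT P V E ->
      forall lam : R, 0 < lam ->
        thick_lk lam (C * (Rmax 1 lam) ^ d) (map circumball E).
Proof.
set C := INR d.+1 * (INR (grid d) + 1) * INR (2 * grid d).+1 ^ d.
have hC : 0 < C.
  have hK := pow_lt _ d (lt_0_INR _ (Nat.lt_0_succ (2 * grid d))).
  have := lt_0_INR _ (Nat.lt_0_succ d); have := @grid_ge1 d.
  by move=> hM hd1; apply: Rmult_lt_0_compat => //; apply: Rmult_lt_0_compat; lra.
exists C; split => // P V E hE lam hlam D x hD hDE hrel hx.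
have [S [eD hSE]] := incl_map_inv hDE; subst D.
rewrite length_map.
case: S {hDE} hSE hD hrel hx => [|s0 S0] hSE hD hrel hx.
  rewrite /=; apply: Rmult_le_pos; first lra.
  by apply: pow_le; apply: Rle_trans (Rmax_l 1 lam); lra.
set S := s0 :: S0 in hSE hD hrel hx *.
have hs0 : In s0 S by left.
have hrad := related_radius_bounds hrel hs0.
have [i hi] : axis_parallel s0 by apply: (hE.1.2.1 s0 (hSE s0 hs0)).2.2.
have hr0 := radius_pos_of_parallel hi.
have hlam1 : 1 <= lam by have := (hrad s0 hs0).1; nra.
rewrite Rmax_right //.
have hL : 0 <= INR (grid d) * lam ^ 2.
  by apply: Rmult_le_pos; [apply: pos_INR | apply: pow2_ge_0].
apply: (Rle_trans _ _ _ _ (related_count_le_pow hd hlam1 (INR_nfloor_le hL))).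
apply: le_INR; apply/leP.
apply: rsmt_related_count hE hSE hr0 hlam hrad _ (NoDup_map_inv _ _ hD).
by move=> s hs; apply: hx; apply: in_map.
Qed.
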